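(* Let $(x_1(t),x_2(t),x_3(t))$, $t\in[0,T)$, be a solution of the Ricci flow system $\frac{dx_i}{dt}=-2r_ix_i$ with $x_1(0)=x_2(0)$. Suppose the initial metric $g_0\leftrightarrow(x_1(0),x_2(0),x_3(0))$ has strictly positive sectional curvature. Then for all $t\in[0,T)$: - $\frac{x_3(t)}{x_1(t)}<\frac{4(d-1)}{d}$; - the Ricci tensor of $g_t\leftrightarrow(x_1(t),x_2(t),x_3(t))$ is positive definite.
   Context: Let $(G,K,d)$ be one of the following three triples: - $(SU(3),\text{maximal torus }T^2,2)$; - $(Sp(3),Sp(1)^3,4)$; - (compact $F_4$, $Spin(8)$, $8$). Let $M=G/K$. With $\langle X,Y\rangle_0=-\tfrac12\mathrm{Re}\,\mathrm{tr}(XY)$ (suitably extended for $F_4$), let $\mathfrak p=\mathfrak k^\perp=V_1\oplus V_2\oplus V_3$ be the decomposition into three pairwise inequivalent irreducible $\mathrm{Ad}(K)$-invariant subspaces of dimension $d$. We write $g\leftrightarrow(x_1,x_2,x_3)$ for the $G$-invariant metric given by $\sum_i x_i\langle\cdot,\cdot\rangle_0|_{V_i}$, with $x_i>0$. Its Ricci tensor is $\sum_i x_ir_i\langle\cdot,\cdot\rangle_0|_{V_i}$, where $$r_i=\frac{d x_i^2-d x_j^2-d x_k^2+(10d-8)x_jx_k}{2x_1x_2x_3},\qquad\{i,j,k\}=\{1,2,3\}.$$ The Ricci flow of $G$-invariant metrics is the ODE system $\frac{dx_i}{dt}=-2r_ix_i$. It is known that for $x_1=x_2$ the metric has strictly positive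 sectional curvature iff $0<x_3/x_1<1$ or $1<x_3/x_1<\tfrac43$. *)

From Stdlib Require Import Reals Lra.
Open Scope R_scope.

(* The three admissible triples (G,K,d): d = 2 (SU(3)/T^2), 4 (Sp(3)/Sp(1)^3),
   8 (F_4/Spin(8)). *)
Definition admissible_d (d : R) : Prop := d = 2 \/ d = 4 \/ d = 8.

Definition ric_comp (d xi xj xk x1 x2 x3 : R) : R :=
  (d * xi ^ 2 - d * xj ^ 2 - d * xk ^ 2 + (10 * d - 8) * xj * xk)
    / (2 * x1 * x2 * x3).

Definition r1 (d x1 x2 x3 : R) : R := ric_comp d x1 x2 x3 x1 x2 x3.
Definition r2 (d x1 x2 x3 : R) : R := ric_comp d x2 x1 x3 x1 x2 x3.
Definition r3 (d x1 x2 x3 : R) : R := ric_comp d x3 x1 x2 x1 x2 x3.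

Definition ricci_flow_solution (d T : R) (x1 x2 x3 : R -> R) : Prop :=
  0 < T /\
  (forall t, 0 <= t < T -> 0 < x1 t /\ 0 < x2 t /\ 0 < x3 t) /\
  (forall t, 0 < t < T ->
     derivable_pt_lim x1 t (-2 * r1 d (x1 t) (x2 t) (x3 t) * x1 t) /\
     derivable_pt_lim x2 t (-2 * r2 d (x1 t) (x2 t) (x3 t) * x2 t) /\
     derivable_pt_lim x3 t (-2 * r3 d (x1 t) (x2 t) (x3 t) * x3 t)) /\
  limit1_in x1 (fun t => 0 <= t < T) (x1 0) 0 /\
  limit1_in x2 (fun t => 0 <= t < T) (x2 0) 0 /\
  limit1_in x3 (fun t => 0 <= t < T) (x3 0) 0.

(* Known characterization (from the context) of strictly positive sectional
   curvature for metrics with x1 = x2: 0 < x3/x1 < 1 or 1 < x3/x1 < 4/3. *)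
Definition pos_sec_curv_x1_eq_x2 (x1 x3 : R) : Prop :=
  (0 < x3 / x1 < 1) \/ (1 < x3 / x1 < 4 / 3).

(* Ricci tensor sum_i x_i r_i <.,.>_0|V_i is positive definite iff each
   coefficient x_i r_i is positive. *)
Definition ricci_pos_def (d x1 x2 x3 : R) : Prop :=
  0 < x1 * r1 d x1 x2 x3 /\ 0 < x2 * r2 d x1 x2 x3 /\ 0 < x3 * r3 d x1 x2 x3.

From Stdlib Require Import Reals Lra Psatz.
From Coquelicot Require Import Coquelicot.
Open Scope R_scope.

(* The argument rests on one ODE fact: if F' = F * G on [a,b] with F, G
   continuous, then F^2 e^{ct} is monotone for c = +-2 sup|G|, so F vanishes
   at a iff it vanishes at b; with the intermediate value theorem, a positive
   F stays positive.  Two such linear equations hide in the flow: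
   - x1 - x2 satisfies one (ricci_flow_difference_12), so x1 = x2 for all t;
   - once x1 = x2, the gap  a x1 - x3  with  a = 4(d-1)/d  satisfies one
     (ricci_flow_ratio_gap); positive curvature at t = 0 gives x3/x1 < 4/3
     <= a, hence the gap stays positive.
   Positivity of the Ricci tensor is then pure algebra in x1 = x2 and x3.
   Since the solution is only right-continuous at t = 0, the ODE lemmas are
   applied to the even extensions s |-> x_i(|s|), continuous on [0,T). *)

Lemma nondecreasing_of_deriv_nonneg (f df : R -> R) (a b : R) :
  a <= b ->
  (forall t, a < t < b -> derivable_pt_lim f t (df t)) ->
  (forall t, a <= t <= b -> continuity_pt f t) ->
  (forall t, a <= t <= b -> 0 <= df t) ->
  f a <= f b.
Proof.
  intros hab hder hcont hsign.
  destruct (MVT_gen f a b df) as [c [hc hmvt]];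
    rewrite ?Rmin_left, ?Rmax_right in * by lra.
  - intros t ht; apply is_derive_Reals; auto.
  - exact hcont.
  - specialize (hsign c hc); nra.
Qed.

Lemma nonincreasing_of_deriv_nonpos (f df : R -> R) (a b : R) :
  a <= b ->
  (forall t, a < t < b -> derivable_pt_lim f t (df t)) ->
  (forall t, a <= t <= b -> continuity_pt f t) ->
  (forall t, a <= t <= b -> df t <= 0) ->
  f b <= f a.
Proof.
  intros hab hder hcont hsign.
  enough (- f a <= - f b) by lra.
  apply (nondecreasing_of_deriv_nonneg (fun t => - f t) (fun t => - df t)); auto.
  - intros t ht; apply (derivable_pt_lim_opp f); auto.
  - intros t ht; apply (continuity_pt_opp f); auto.
  - intros t ht; specialize (hsign t ht); lra.
Qed.

Lemma derivable_pt_lim_exp_scal (c t : R) :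
  derivable_pt_lim (fun s => exp (c * s)) t (c * exp (c * t)).
Proof.
  replace (c * exp (c * t)) with (exp (c * t) * c) by ring.
  apply (derivable_pt_lim_comp (fun s => c * s) exp).
  - pose proof (derivable_pt_lim_scal (fun s => s) c t 1 (derivable_pt_lim_id t))
      as hlin.
    rewrite Rmult_1_r in hlin; exact hlin.
  - apply derivable_pt_lim_exp.
Qed.

Lemma derivable_pt_lim_sq_exp (F G : R -> R) (c t : R) :
  derivable_pt_lim F t (F t * G t) ->
  derivable_pt_lim (fun s => F s ^ 2 * exp (c * s)) t
    ((2 * G t + c) * (F t ^ 2 * exp (c * t))).
Proof.
  intros hF.
  assert (hsq : derivable_pt_lim (fun s => F s ^ 2) t (2 * G t * F t ^ 2)).
  { replace (2 * G t * F t ^ 2) with (INR 2 * F t ^ (2 - 1) * (F t * G t))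
      by (simpl; ring).
    apply (derivable_pt_lim_comp F (fun x => x ^ 2)); auto.
    apply derivable_pt_lim_pow. }
  replace ((2 * G t + c) * (F t ^ 2 * exp (c * t)))
    with (2 * G t * F t ^ 2 * exp (c * t) + F t ^ 2 * (c * exp (c * t))) by ring.
  apply (derivable_pt_lim_mult (fun s => F s ^ 2) (fun s => exp (c * s))); auto.
  apply derivable_pt_lim_exp_scal.
Qed.

Lemma continuity_pt_sq_exp (F : R -> R) (c t : R) :
  continuity_pt F t -> continuity_pt (fun s => F s ^ 2 * exp (c * s)) t.
Proof.
  intros hF.
  apply (continuity_pt_mult (fun s => F s ^ 2) (fun s => exp (c * s))).
  - apply (continuity_pt_comp F (fun x => x ^ 2)); auto.
    apply derivable_continuous_pt; exists (INR 2 * F t ^ (2 - 1));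
      apply derivable_pt_lim_pow.
  - apply derivable_continuous_pt; exists (c * exp (c * t));
      apply derivable_pt_lim_exp_scal.
Qed.

Lemma sq_exp_zero (x c s : R) : x ^ 2 * exp (c * s) <= 0 -> x = 0.
Proof.
  intros h; pose proof (exp_pos (c * s)).
  assert (x ^ 2 <= 0) by (apply (Rmult_le_reg_r (exp (c * s))); lra).
  nra.
Qed.

Lemma continuous_abs_bounded (G : R -> R) (a b : R) :
  a <= b -> (forall t, a <= t <= b -> continuity_pt G t) ->
  exists K, forall t, a <= t <= b -> Rabs (G t) <= K.
Proof.
  intros hab hG.
  destruct (continuity_ab_maj (fun t => Rabs (G t)) a b hab) as [M [hM _]].
  - intros t ht; apply (continuity_pt_comp G Rabs); auto; apply Rcontinuity_abs.
  - exists (Rabs (G M)); exact hM.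
Qed.

Lemma linear_ode_zero_iff (F G : R -> R) (a b : R) :
  a <= b ->
  (forall t, a <= t <= b -> continuity_pt F t) ->
  (forall t, a <= t <= b -> continuity_pt G t) ->
  (forall t, a < t < b -> derivable_pt_lim F t (F t * G t)) ->
  F a = 0 <-> F b = 0.
Proof.
  intros hab hF hG hder.
  destruct (continuous_abs_bounded G a b hab hG) as [K hK].
  assert (hbound : forall t, a <= t <= b -> - K <= G t <= K).
  { intros t ht; specialize (hK t ht); apply Rabs_le_between in hK; lra. }
  assert (hsq : forall c, forall t, a < t < b ->
    derivable_pt_lim (fun s => F s ^ 2 * exp (c * s)) t
      ((2 * G t + c) * (F t ^ 2 * exp (c * t))))
    by (intros c t ht; apply derivable_pt_lim_sq_exp; auto).
  assert (hweight : forall c t, 0 <= F t ^ 2 * exp (c * t))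
    by (intros c t; pose proof (exp_pos (c * t)); nra).
  split; intros hzero.
  - assert (hdecr : F b ^ 2 * exp (- (2 * K) * b) <= F a ^ 2 * exp (- (2 * K) * a)).
    { apply (nonincreasing_of_deriv_nonpos _ _ a b hab (hsq _));
        [intros; apply continuity_pt_sq_exp; auto|].
      intros t ht; specialize (hbound t ht); specialize (hweight (- (2 * K)) t); nra. }
    rewrite hzero in hdecr; apply (sq_exp_zero _ (- (2 * K)) b); lra.
  - assert (hincr : F a ^ 2 * exp (2 * K * a) <= F b ^ 2 * exp (2 * K * b)).
    { apply (nondecreasing_of_deriv_nonneg _ _ a b hab (hsq _));
        [intros; apply continuity_pt_sq_exp; auto|].
      intros t ht; specialize (hbound t ht); specialize (hweight (2 * K) t); nra. }
    rewrite hzero in hincr; apply (sq_exp_zero _ (2 * K) a); lra.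
Qed.

(* A solution of a linear ODE which is positive at a stays positive on
   [a,b]: it never vanishes, so by the intermediate value theorem it cannot
   change sign. *)
Lemma linear_ode_positive (F G : R -> R) (a b : R) :
  (forall t, a <= t <= b -> continuity_pt F t) ->
  (forall t, a <= t <= b -> continuity_pt G t) ->
  (forall t, a < t < b -> derivable_pt_lim F t (F t * G t)) ->
  0 < F a -> forall t, a <= t <= b -> 0 < F t.
Proof.
  intros hF hG hder hpos t ht.
  assert (hnonzero : forall s, a <= s <= t -> F s <> 0).
  { intros s hs hzero.
    apply (linear_ode_zero_iff F G a s) in hzero; try lra;
      intros u hu; (apply hF || apply hG || apply hder); lra. }
  destruct (Rlt_or_le 0 (F t)) as [hlt | hle]; [exact hlt | exfalso].
  destruct (Rle_lt_or_eq_dec (F t) 0 hle) as [hneg | hzero];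
    [| apply (hnonzero t); lra].
  destruct (Req_dec a t) as [-> | hat]; [lra|].
  destruct (Ranalysis5.IVT_interv (fun s => - F s) a t) as [s [hs hFs]];
    try lra.
  - intros u hu; apply (continuity_pt_opp F), hF; lra.
  - apply (hnonzero s); lra.
Qed.

Definition even_ext (x : R -> R) : R -> R := fun s => x (Rabs s).

Lemma even_ext_nonneg (x : R -> R) (s : R) : 0 <= s -> even_ext x s = x s.
Proof. intros hs; unfold even_ext; rewrite Rabs_pos_eq; auto. Qed.

Lemma even_ext_derivable (x : R -> R) (t l : R) :
  0 < t -> derivable_pt_lim x t l -> derivable_pt_lim (even_ext x) t l.
Proof.
  intros ht hx.
  rewrite <- (Rabs_pos_eq t) in hx by lra.
  pose proof (derivable_pt_lim_comp Rabs x t 1 l (Rabs_derive_1 t ht) hx) as hcomp.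
  rewrite Rmult_1_r in hcomp; exact hcomp.
Qed.

Lemma even_ext_continuous (x dx : R -> R) (T : R) :
  (forall t, 0 < t < T -> derivable_pt_lim x t (dx t)) ->
  limit1_in x (fun t => 0 <= t < T) (x 0) 0 ->
  forall t, 0 <= t < T -> continuity_pt (even_ext x) t.
Proof.
  intros hder hlim t [h0 hT].
  destruct (Rle_lt_or_eq_dec 0 t h0) as [hpos | <-].
  - apply (continuity_pt_comp Rabs x); [apply Rcontinuity_abs|].
    rewrite Rabs_pos_eq by lra; apply derivable_continuous_pt; exists (dx t); apply hder; lra.
  - intros eps heps; destruct (hlim eps heps) as [delta [hdelta hclose]].
    exists (Rmin delta T); split; [apply Rmin_pos; lra|].
    intros s [_ hs]; simpl in *; unfold R_dist, even_ext in *.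
    rewrite Rminus_0_r, Rabs_R0 in *.
    pose proof (Rmin_l delta T); pose proof (Rmin_r delta T).
    apply hclose; rewrite Rminus_0_r, Rabs_Rabsolu;
      split; [split; [apply Rabs_pos | lra] | lra].
Qed.

Lemma ricci_flow_difference_12 (d x1 x2 x3 : R) :
  x1 <> 0 -> x2 <> 0 -> x3 <> 0 ->
  -2 * r1 d x1 x2 x3 * x1 - -2 * r2 d x1 x2 x3 * x2
  = (x1 - x2) * (d * (x3 * x3 - (x1 + x2) * (x1 + x2)) * / (x1 * x2 * x3)).
Proof. intros; unfold r1, r2, ric_comp; field; auto. Qed.

Lemma ricci_flow_ratio_gap (d x x3 : R) :
  d <> 0 -> x <> 0 -> x3 <> 0 ->
  4 * (d - 1) / d * (-2 * r1 d x x x3 * x) - -2 * r3 d x x x3 * x3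
  = (4 * (d - 1) / d * x - x3) * (- (d * x3 + 8 * (d - 1) * x) * / (x * x)).
Proof. intros; unfold r1, r3, ric_comp; field; auto. Qed.

(* For x1 = x2 = x, the bound x3 < a x makes every Ricci coefficient positive:
   x r1 = ((10d-8) x - d x3)/(2x) and x3 r3 > 0 always. *)
Lemma ricci_pos_of_ratio_bound (d x x3 : R) :
  1 <= d -> 0 < x -> 0 < x3 -> x3 < 4 * (d - 1) / d * x ->
  ricci_pos_def d x x x3.
Proof.
  intros hd hx hx3 hratio.
  assert (hgap : 0 < (10 * d - 8) * x - d * x3).
  { apply (Rmult_lt_compat_l d) in hratio; [| lra].
    replace (d * (4 * (d - 1) / d * x)) with (4 * (d - 1) * x) in hratio
      by (field; lra).
    nra. }
  unfold ricci_pos_def, r1, r2, r3, ric_comp.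
  replace (x * ((d * x ^ 2 - d * x ^ 2 - d * x3 ^ 2 + (10 * d - 8) * x * x3)
              / (2 * x * x * x3)))
    with (((10 * d - 8) * x - d * x3) / (2 * x)) by (field; lra).
  replace (x3 * ((d * x3 ^ 2 - d * x ^ 2 - d * x ^ 2 + (10 * d - 8) * x * x)
                / (2 * x * x * x3)))
    with ((d * x3 ^ 2 + (8 * d - 8) * x ^ 2) / (2 * x ^ 2)) by (field; lra).
  repeat split; apply Rdiv_lt_0_compat; nra.
Qed.

(* Positive sectional curvature at x1 = x2 forces x3/x1 < 4/3, and
   4/3 <= 4(d-1)/d for the admissible d. *)
Lemma positive_curvature_ratio_bound (d x1 x3 : R) :
  admissible_d d -> 0 < x1 -> pos_sec_curv_x1_eq_x2 x1 x3 ->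
  x3 < 4 * (d - 1) / d * x1.
Proof.
  intros hd hx1 hsec.
  assert (hquot : x3 / x1 < 4 / 3) by (destruct hsec; lra).
  assert (hbound : 4 / 3 <= 4 * (d - 1) / d)
    by (destruct hd as [-> | [-> | ->]]; lra).
  apply (Rmult_lt_compat_r x1) in hquot; [| lra].
  replace (x3 / x1 * x1) with x3 in hquot by (field; lra).
  nra.
Qed.

(* Continuity of rational expressions in continuous functions; leaves the
   nonvanishing side conditions of inverses. *)
Ltac solve_continuity :=
  repeat first
    [ (apply continuity_pt_const; intros ? ?; reflexivity)
    | apply continuity_pt_mult | apply continuity_pt_plus
    | apply continuity_pt_minus | apply continuity_pt_opp
    | apply continuity_pt_inv | assumption ].

Section RicciFlowSolution.

Variables (d T : R) (x1 x2 x3 : R -> R).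
Hypothesis flow : ricci_flow_solution d T x1 x2 x3.

Lemma flow_positive (t : R) :
  0 <= t < T -> 0 < x1 t /\ 0 < x2 t /\ 0 < x3 t.
Proof. destruct flow as (_ & hpos & _); apply hpos. Qed.

Lemma flow_ext_derivable (t : R) :
  0 < t < T ->
  derivable_pt_lim (even_ext x1) t (-2 * r1 d (x1 t) (x2 t) (x3 t) * x1 t) /\
  derivable_pt_lim (even_ext x2) t (-2 * r2 d (x1 t) (x2 t) (x3 t) * x2 t) /\
  derivable_pt_lim (even_ext x3) t (-2 * r3 d (x1 t) (x2 t) (x3 t) * x3 t).
Proof.
  intros ht; destruct flow as (_ & _ & hder & _).
  destruct (hder t ht) as (h1 & h2 & h3).
  repeat split; apply even_ext_derivable; auto; lra.
Qed.

Lemma flow_ext_continuous (t : R) :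
  0 <= t < T ->
  continuity_pt (even_ext x1) t /\ continuity_pt (even_ext x2) t /\
  continuity_pt (even_ext x3) t.
Proof.
  intros ht; destruct flow as (_ & _ & hder & hlim1 & hlim2 & hlim3).
  repeat split; (eapply even_ext_continuous; [| eassumption | exact ht]);
    intros s hs; apply hder, hs.
Qed.

Lemma flow_ext_positive (t : R) :
  0 <= t < T -> 0 < even_ext x1 t /\ 0 < even_ext x2 t /\ 0 < even_ext x3 t.
Proof.
  intros ht; rewrite !even_ext_nonneg by lra; apply flow_positive, ht.
Qed.

Lemma flow_preserves_equal_fibres :
  x1 0 = x2 0 -> forall t, 0 <= t < T -> x1 t = x2 t.
Proof.
  intros h12 t ht.
  set (y1 := even_ext x1); set (y2 := even_ext x2); set (y3 := even_ext x3).
  assert (hzero : y1 t - y2 t = 0).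
  { apply (linear_ode_zero_iff (fun s => y1 s - y2 s)
      (fun s => d * (y3 s * y3 s - (y1 s + y2 s) * (y1 s + y2 s))
                  * / (y1 s * y2 s * y3 s)) 0 t); try lra.
    - intros s hs; destruct (flow_ext_continuous s) as (c1 & c2 & _); [lra|].
      solve_continuity.
    - intros s hs; destruct (flow_ext_continuous s) as (c1 & c2 & c3); [lra|].
      destruct (flow_ext_positive s) as (p1 & p2 & p3); [lra|].
      solve_continuity; apply Rgt_not_eq, Rmult_lt_0_compat;
        [apply Rmult_lt_0_compat|]; assumption.
    - intros s hs; cbv beta.
      destruct (flow_ext_derivable s) as (h1 & h2 & _); [lra|].
      destruct (flow_positive s) as (p1 & p2 & p3); [lra|].
      unfold y1, y2, y3; rewrite !(even_ext_nonneg _ s) by lra.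
      rewrite <- ricci_flow_difference_12 by lra.
      apply (derivable_pt_lim_minus (even_ext x1) (even_ext x2)); assumption.
    - unfold y1, y2; rewrite !even_ext_nonneg by lra; lra. }
  unfold y1, y2 in hzero; rewrite !even_ext_nonneg in hzero by lra; lra.
Qed.

Lemma flow_preserves_ratio_bound :
  0 < d -> (forall t, 0 <= t < T -> x1 t = x2 t) ->
  x3 0 < 4 * (d - 1) / d * x1 0 ->
  forall t, 0 <= t < T -> x3 t < 4 * (d - 1) / d * x1 t.
Proof.
  intros hd heq hinit t ht.
  set (a := 4 * (d - 1) / d).
  set (y1 := even_ext x1); set (y3 := even_ext x3).
  assert (hgap : 0 < a * y1 t - y3 t).
  { apply (linear_ode_positive (fun s => a * y1 s - y3 s)
      (fun s => - (d * y3 s + 8 * (d - 1) * y1 s) * / (y1 s * y1 s)) 0 t);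
      try lra.
    - intros s hs; destruct (flow_ext_continuous s) as (c1 & _ & c3); [lra|].
      solve_continuity.
    - intros s hs; destruct (flow_ext_continuous s) as (c1 & _ & c3); [lra|].
      destruct (flow_ext_positive s) as (p1 & _ & _); [lra|].
      solve_continuity; apply Rgt_not_eq, Rmult_lt_0_compat; assumption.
    - intros s hs; cbv beta.
      destruct (flow_ext_derivable s) as (h1 & _ & h3); [lra|].
      destruct (flow_positive s) as (p1 & _ & p3); [lra|].
      rewrite <- (heq s) in h1, h3 by lra.
      unfold y1, y3; rewrite !(even_ext_nonneg _ s) by lra.
      unfold a; rewrite <- ricci_flow_ratio_gap by lra.
      apply (derivable_pt_lim_minus (fun u => a * even_ext x1 u) (even_ext x3));
        [apply (derivable_pt_lim_scal (even_ext x1)) |]; assumption.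
    - unfold a, y1, y3; rewrite !even_ext_nonneg by lra; lra. }
  unfold y1, y3 in hgap; rewrite !even_ext_nonneg in hgap by lra; lra.
Qed.

End RicciFlowSolution.

Theorem mainTheorem6 (d T : R) (x1 x2 x3 : R -> R) :
  admissible_d d ->
  ricci_flow_solution d T x1 x2 x3 ->
  x1 0 = x2 0 ->
  pos_sec_curv_x1_eq_x2 (x1 0) (x3 0) ->
  forall t, 0 <= t < T ->
    x3 t / x1 t < 4 * (d - 1) / d /\ ricci_pos_def d (x1 t) (x2 t) (x3 t).
Proof.
  intros hd flow h12 hsec t ht.
  assert (hd1 : 1 <= d) by (destruct hd as [-> | [-> | ->]]; lra).
  destruct (flow_positive d T x1 x2 x3 flow 0) as (p1 & _ & _);
    [destruct flow; lra|].
  destruct (flow_positive d T x1 x2 x3 flow t ht) as (q1 & _ & q3).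
  pose proof (flow_preserves_equal_fibres d T x1 x2 x3 flow h12) as heq.
  assert (hratio : x3 t < 4 * (d - 1) / d * x1 t).
  { apply (flow_preserves_ratio_bound d T x1 x2 x3 flow); auto; [lra|].
    apply positive_curvature_ratio_bound; assumption. }
  rewrite <- (heq t ht); split.
  - apply (Rmult_lt_reg_r (x1 t)); [lra|].
    replace (x3 t / x1 t * x1 t) with (x3 t) by (field; lra); exact hratio.
  - apply ricci_pos_of_ratio_bound; assumption.
Qed.
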